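(* Let $n$ be an integer, $p$ a prime dividing $2n+1$, $K$ a number field containing a root $\omega$ of $\Delta_n=S_n'S_{n-1}-S_nS_{n-1}'$, and $v$ a valuation on $K$ with $v(p)=1$. Then $v(S_{n-1}(\omega))=0$.
   Context: The Chebyshev polynomials $S_j(\omega)$ are defined for all integers $j$ by $S_0=1$, $S_1=\omega$, $S_{j+1}=\omega S_j-S_{j-1}$; primes denote derivatives with respect to $\omega$. *)

From HB Require Import structures.
From mathcomp Require Import all_boot all_order all_algebra all_field.
Set Implicit Arguments. Unset Strict Implicit. Unset Printing Implicit Defensive.
Import Order.TTheory GRing.Theory Num.Theory.
Local Open Scope ring_scope.

Fixpoint chebS_nat (R : nzRingType) (j : nat) : {poly R} :=
  match j with
  | 0%N => 1
  | 1%N => 'X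
  | (k.+1 as j1).+1 => 'X * chebS_nat R j1 - chebS_nat R k
  end.

(* S_j for all integers j, extending the recurrence S_{j+1} = X S_j - S_{j-1}
   backwards: S_{-1} = 0 and S_{-k} = - S_{k-2} for k >= 2. *)
Definition chebS (R : nzRingType) (j : int) : {poly R} :=
  match j with
  | Posz k => chebS_nat R k
  | Negz 0 => 0
  | Negz k.+1 => - chebS_nat R k
  end.

Definition chebDelta (R : nzRingType) (n : int) : {poly R} :=
  (chebS R n)^`() * chebS R (n - 1) - chebS R n * (chebS R (n - 1))^`().

(* A (real-valued, additively written) valuation on a field K:
   v is defined on nonzero elements; v(0) = +oo is implicit. *)
Definition is_valuation (K : fieldType) (G : realFieldType) (v : K -> G) : Prop :=
  (forall x y : K, x != 0 -> y != 0 -> v (x * y) = v x + v y) /\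
  (forall x y : K, x != 0 -> y != 0 -> x + y != 0 -> Num.min (v x) (v y) <= v (x + y)).

From HB Require Import structures.
From mathcomp Require Import all_boot all_order all_algebra all_field.
From mathcomp Require Import zify ring lra.
Set Implicit Arguments. Unset Strict Implicit. Unset Printing Implicit Defensive.
Import Order.TTheory GRing.Theory Num.Theory.
Local Open Scope ring_scope.

(* The differential equation (X^2 - 4) S_m' = m X S_m - 2 (m + 1) S_(m-1)
   together with the Cassini identity S_m^2 - S_(m+1) S_(m-1) = 1 gives
   (X^2 - 4) Delta_n = S_(n-1) V_(n+1) - 2n, where V_j = S_j - S_(j-2).
   At a root omega of Delta_n this reads S_(n-1)(omega) V_(n+1)(omega) = 2n,
   and 2n = -1 mod p is a v-unit.  If v(omega) < 0, leading terms dominate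
   and the product has valuation (|n| + |n+1| - 1) v(omega) < 0; so omega is
   v-integral, both factors are v-integral, and their valuations, summing to
   0, both vanish. *)

Lemma int_ind2 (P : int -> Prop) : P 0 -> P (-1) ->
    (forall m, P (m - 1) -> P m -> P (m + 1)) ->
    (forall m, P m -> P (m + 1) -> P (m - 1)) ->
  forall m, P m.
Proof.
move=> P0 Pm1 Pup Pdown.
suff Q : forall m, P m /\ P (m - 1) by move=> m; case: (Q m).
elim/int_ind => [|k [Pk Pk1]|k [Pk Pk1]]; first by [].
- split; last by rewrite -addn1 PoszD addrK.
  by rewrite -addn1 PoszD; apply: Pup.
- have e : - (k.+1 : int) = - (k : int) - 1 by lia.
  by rewrite e; split=> //; apply: Pdown; rewrite ?subrK.
Qed.

Section Chebyshev.
Variable R : comNzRingType.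
Local Notation S := (chebS R).

Definition chebV (j : int) : {poly R} := S j - S (j - 2).

Lemma chebS_rec (m : int) : S (m + 1) = 'X * S m - S (m - 1).
Proof.
case: m => [[|[|k]]|[|[|k]]].
- by rewrite /= mulr1 subr0.
- by [].
- have -> : Posz k.+2 + 1 = k.+3 by lia.
  by have -> : Posz k.+2 - 1 = k.+1 by lia.
- by rewrite /= mulr0 sub0r opprK.
- by rewrite /=; ring.
- have -> : Negz k.+2 + 1 = Negz k.+1 by rewrite !NegzE; lia.
  have -> : Negz k.+2 - 1 = Negz k.+3 by rewrite !NegzE; lia.
  by rewrite /=; ring.
Qed.

Lemma chebS_opp (m : int) : S (- m) = - S (m - 2).
Proof.
case: m => [[|[|k]]|k].
- by rewrite /= opprK.
- by rewrite /= oppr0.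
- by have -> : Posz k.+2 - 2 = k by lia.
- have -> : Negz k - 2 = Negz k.+2 by rewrite !NegzE; lia.
  by rewrite NegzE opprK /= opprK.
Qed.

Lemma chebV_opp (m : int) : chebV (- m) = chebV m.
Proof.
rewrite /chebV; have -> : - m - 2 = - (m + 2) by ring.
by rewrite !chebS_opp addrK opprK addrC.
Qed.

Lemma chebS_rec_eq0 (f : int -> {poly R}) :
    (forall m, f (m + 1) = 'X * f m - f (m - 1)) -> f 0 = 0 -> f (-1) = 0 ->
  forall m, f m = 0.
Proof.
move=> frec f0 fm1; apply: int_ind2 => // m.
- by move=> fpred fm; rewrite frec fm fpred mulr0 subr0.
- move=> fm fsucc; have := frec m; rewrite fm fsucc mulr0 sub0r.
  by move/eqP; rewrite eq_sym oppr_eq0 => /eqP.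
Qed.

Lemma chebS_deriv (m : int) :
  ('X ^+ 2 - 4) * (S m)^`() = m%:~R * 'X * S m - 2 * (m + 1)%:~R * S (m - 1).
Proof.
pose E m := ('X ^+ 2 - 4) * (S m)^`() - m%:~R * 'X * S m + 2 * (m + 1)%:~R * S (m - 1).
suff Em : forall m, E m = 0 by rewrite -[LHS]subr0 -{1}(Em m) /E; ring.
apply: chebS_rec_eq0; last 2 first.
- by rewrite /E /= derivC; ring.
- by rewrite /E /= derivC; ring.
move=> k; rewrite /E addrK subrK.
have Sk2 : S (k - 1 - 1) = 'X * S (k - 1) - S k.
  by rewrite -[in S k](subrK 1 k) chebS_rec; ring.
rewrite chebS_rec Sk2 derivB derivM derivX mul1r !intrD ?intrB.
ring.
Qed.

Lemma chebS_cassini (m : int) : S m * S m - S (m + 1) * S (m - 1) = 1.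
Proof.
pose C m := S m * S m - S (m + 1) * S (m - 1).
have Csucc k : C (k + 1) = C k.
  by rewrite /C addrK (chebS_rec (k + 1)) addrK chebS_rec; ring.
move: m; apply: (@int_ind2 (fun m => C m = 1)) => [||k _ Ck|k Ck _].
- by rewrite /C /=; ring.
- by rewrite /C /=; ring.
- by rewrite Csucc.
- by rewrite -Ck -{2}(subrK 1 k) Csucc.
Qed.

Lemma chebDelta_identity (n : int) :
  ('X ^+ 2 - 4) * chebDelta R n = S (n - 1) * chebV (n + 1) - (2 * n)%:~R.
Proof.
have dn := chebS_deriv n; have dn1 := chebS_deriv (n - 1).
have c := chebS_cassini (n - 1); rewrite subrK in dn1 c.
have -> : chebV (n + 1) = 'X * S n - 2 * S (n - 1).
  by rewrite /chebV chebS_rec (_ : n + 1 - 2 = n - 1) //; [ring | lia].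
have -> : ('X ^+ 2 - 4) * chebDelta R n =
    ('X ^+ 2 - 4) * (S n)^`() * S (n - 1) - S n * (('X ^+ 2 - 4) * (S (n - 1))^`()).
  by rewrite /chebDelta; ring.
have -> : (2 * n)%:~R = (2 * n)%:~R * (S (n - 1) * S (n - 1) - S n * S (n - 1 - 1)).
  by rewrite c mulr1.
rewrite dn dn1 intrD intrB intrM.
ring.
Qed.

End Chebyshev.

Section Valuation.
Variables (K : fieldType) (G : realFieldType) (v : K -> G).
Hypothesis v_valuation : is_valuation v.

Lemma valuationM {x y : K} : x != 0 -> y != 0 -> v (x * y) = v x + v y.
Proof. exact: v_valuation.1. Qed.

Lemma valuation1 : v 1 = 0.
Proof. by have := valuationM (oner_neq0 K) (oner_neq0 K); rewrite mulr1; lra. Qed.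

Lemma valuationN (x : K) : x != 0 -> v (- x) = v x.
Proof.
have N1 : (-1 : K) != 0 by rewrite oppr_eq0 oner_neq0.
have vN1 : v (-1) = 0 by have := valuationM N1 N1; rewrite mulrNN mulr1 valuation1; lra.
by move=> x0; rewrite -mulN1r valuationM // vN1 add0r.
Qed.

Lemma valuationD_lt {x y : K} :
  x != 0 -> y != 0 -> v x < v y -> x + y != 0 /\ v (x + y) = v x.
Proof.
move=> x0 y0 lt_xy.
have xy0 : x + y != 0.
  by apply: contraTneq lt_xy => /eqP; rewrite addr_eq0 => /eqP ->; rewrite valuationN // ltxx.
split=> //; have := v_valuation.2 _ _ x0 y0 xy0.
have Ny0 : - y != 0 by rewrite oppr_eq0.
have := v_valuation.2 _ _ xy0 Ny0; rewrite addrK valuationN //.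
by rewrite !ge_min => /(_ x0) /orP[h1|h1] /orP[h2|h2]; lra.
Qed.

(* [v 0] is unconstrained, so [0] is declared integral separately. *)
Definition vint (x : K) := x = 0 \/ 0 <= v x.

Lemma vint_ge0 {x : K} : x != 0 -> vint x -> 0 <= v x.
Proof. by move=> x0 [x_eq0|//]; rewrite x_eq0 eqxx in x0. Qed.

Lemma vint0 : vint 0. Proof. by left. Qed.

Lemma vint1 : vint 1. Proof. by right; rewrite valuation1. Qed.

Lemma vintN {x : K} : vint x -> vint (- x).
Proof.
have [->|x0] := eqVneq x 0; first by rewrite oppr0.
by move/(vint_ge0 x0) => ?; right; rewrite valuationN.
Qed.

Lemma vintM {x y : K} : vint x -> vint y -> vint (x * y).
Proof.
have [->|x0] := eqVneq x 0; first by rewrite mul0r.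
have [->|y0] := eqVneq y 0; first by rewrite mulr0.
move=> /(vint_ge0 x0) ? /(vint_ge0 y0) ?; right; rewrite valuationM //; lra.
Qed.

Lemma vintD {x y : K} : vint x -> vint y -> vint (x + y).
Proof.
have [->|x0] := eqVneq x 0; first by rewrite add0r.
have [->|y0] := eqVneq y 0; first by rewrite addr0.
have [->|xy0] := eqVneq (x + y) 0; first by left.
move=> /(vint_ge0 x0) ? /(vint_ge0 y0) ?; right.
by have := v_valuation.2 _ _ x0 y0 xy0; rewrite ge_min => /orP[]; lra.
Qed.

Lemma vintB {x y : K} : vint x -> vint y -> vint (x - y).
Proof. by move=> ? ?; apply/vintD/vintN. Qed.

Lemma vint_nat (k : nat) : vint k%:R.
Proof. by elim: k => [|k IHk]; [exact: vint0 | rewrite -natr1; apply: vintD IHk vint1]. Qed.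

Lemma vint_int (z : int) : vint z%:~R.
Proof. by case: z => k; [exact: vint_nat | rewrite NegzE mulrNz; apply/vintN/vint_nat]. Qed.

Lemma valuation_mulr_subr1 (q : int) (x : K) :
  0 < v x -> q%:~R * x - 1 != 0 /\ v (q%:~R * x - 1) = 0.
Proof.
move=> vx_gt0; have N1 : (-1 : K) != 0 by rewrite oppr_eq0 oner_neq0.
have [->|qx0] := eqVneq (q%:~R * x) 0.
  by rewrite sub0r N1 valuationN ?oner_neq0 ?valuation1.
have [q0 x0] : q%:~R != 0 :> K /\ x != 0 by move: qx0; rewrite mulf_eq0 negb_or => /andP.
have vqx_gt0 : v (-1) < v (q%:~R * x).
  rewrite valuationM // valuationN ?valuation1 ?oner_neq0 //.
  by have := vint_ge0 q0 (vint_int q); lra.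
have [] := valuationD_lt N1 qx0 vqx_gt0.
by rewrite addrC valuationN ?valuation1 ?oner_neq0.
Qed.

Lemma vint_chebS (w : K) : vint w -> forall m, vint (chebS K m).[w].
Proof.
move=> w_int; apply: int_ind2 => [||m Sm1 Sm|m Sm Sm1].
- by rewrite /= hornerC; exact: vint1.
- by rewrite /= horner0; exact: vint0.
- by rewrite chebS_rec !hornerE; apply: vintB (vintM w_int Sm) Sm1.
- have -> : chebS K (m - 1) = 'X * chebS K m - chebS K (m + 1) by rewrite chebS_rec; ring.
  by rewrite !hornerE; apply: vintB (vintM w_int Sm) Sm1.
Qed.

Lemma valuation_chebS_nat {w : K} (k : nat) : w != 0 -> v w < 0 ->
  (chebS K k).[w] != 0 /\ v (chebS K k).[w] = k%:R * v w.
Proof.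
move=> w0 vw_lt0.
pose P (j : nat) := (chebS K j).[w] != 0 /\ v (chebS K j).[w] = j%:R * v w.
suff : P k /\ P k.+1 by case.
elim: k => [|k [[Sk0 vSk] [Sk1_0 vSk1]]].
  by rewrite /P /= !hornerE oner_neq0 valuation1 w0.
split=> //; rewrite /P.
have -> : chebS K k.+2 = 'X * chebS K k.+1 - chebS K k by [].
have wSk1_0 : w * (chebS K k.+1).[w] != 0 by rewrite mulf_neq0.
have NSk0 : - (chebS K k).[w] != 0 by rewrite oppr_eq0.
have lt : v (w * (chebS K k.+1).[w]) < v (- (chebS K k).[w]).
  by rewrite valuationM // valuationN // vSk1 vSk -!natr1; lra.
have [] := valuationD_lt wSk1_0 NSk0 lt.
by rewrite !hornerE valuationM // vSk1 -!natr1 => -> ->; split=> //; ring.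
Qed.

Lemma valuation_chebV_nat {w : K} (k : nat) : w != 0 -> v w < 0 ->
  (chebV K k.+1).[w] != 0 /\ v (chebV K k.+1).[w] = k.+1%:R * v w.
Proof.
move=> w0 vw_lt0; case: k => [|k].
  by rewrite /chebV /= hornerD hornerN hornerX horner0 subr0 w0 mul1r.
rewrite /chebV (_ : Posz k.+2 - 2 = k); last by lia.
have [Sk2_0 vSk2] := valuation_chebS_nat k.+2 w0 vw_lt0.
have [Sk0 vSk] := valuation_chebS_nat k w0 vw_lt0.
have NSk0 : - (chebS K k).[w] != 0 by rewrite oppr_eq0.
have lt : v (chebS K k.+2).[w] < v (- (chebS K k).[w]).
  by rewrite valuationN // vSk2 vSk -!natr1; lra.
by rewrite hornerD hornerN; have [-> ->] := valuationD_lt Sk2_0 NSk0 lt.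
Qed.

Lemma valuation_chebS_chebV_lt0 {w : K} (n : int) :
    w != 0 -> v w < 0 -> n != 0 -> n != -1 ->
  (chebS K (n - 1) * chebV K (n + 1)).[w] != 0 /\
  v (chebS K (n - 1) * chebV K (n + 1)).[w] < 0.
Proof.
move=> w0 vw_lt0; case: n => [[|m]|[|m]] // _ _.
- have -> : Posz m.+1 - 1 = m by rewrite -addn1 PoszD addrK.
  have -> : Posz m.+1 + 1 = m.+2 by rewrite -PoszD addn1.
  rewrite hornerM.
  have [S0 vS] := valuation_chebS_nat m w0 vw_lt0.
  have [V0 vV] := valuation_chebV_nat m.+1 w0 vw_lt0.
  rewrite mulf_neq0 // valuationM // vS vV -mulrDl -natrD; split=> //.
  by rewrite nmulr_llt0 // ltr0n addnS.
- have -> : Negz m.+1 - 1 = - (m.+3 : int) by rewrite NegzE; lia.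
  have -> : Negz m.+1 + 1 = - (m.+1 : int) by rewrite NegzE; lia.
  rewrite chebS_opp chebV_opp hornerM hornerN.
  have -> : (m.+3 : int) - 2 = m.+1 by lia.
  have [S0 vS] := valuation_chebS_nat m.+1 w0 vw_lt0.
  have [V0 vV] := valuation_chebV_nat m w0 vw_lt0.
  have NS0 : - (chebS K m.+1).[w] != 0 by rewrite oppr_eq0.
  rewrite mulf_neq0 // valuationM // valuationN // vS vV -mulrDl -natrD; split=> //.
  by rewrite nmulr_llt0 // ltr0n addnS.
Qed.

Lemma vint_chebV (w : K) : vint w -> forall m, vint (chebV K m).[w].
Proof. by move=> w_int m; rewrite hornerD hornerN; apply: vintB; apply: vint_chebS. Qed.

Lemma vint_chebS_chebV_unit (n : int) (w : K) : n != 0 -> n != -1 ->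
  v (chebS K (n - 1) * chebV K (n + 1)).[w] = 0 -> vint w.
Proof.
move=> n0 nN1 unit; have [->|w0] := eqVneq w 0; first exact: vint0.
rewrite /vint; case: leP => [|vw_lt0]; [by right | exfalso].
by have [_] := valuation_chebS_chebV_lt0 w0 vw_lt0 n0 nN1; rewrite unit ltxx.
Qed.

End Valuation.

Theorem lemma5p6 (n : int) (p : nat) (K : fieldExtType rat) (G : realFieldType)
    (omega : K) (v : K -> G) :
  prime p -> (p%:Z %| 2 * n + 1)%Z ->
  root (chebDelta K n) omega ->
  is_valuation v -> v (p%:R) = 1 ->
  (chebS K (n - 1)).[omega] != 0 /\ v (chebS K (n - 1)).[omega] = 0.
Proof.
move=> p_prime p_dvd Delta_omega v_valuation vp.
have p_ndvd1 : ~~ (p%:Z %| 1)%Z by rewrite dvdzE /= dvdn1; case: eqP p_prime => // ->.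
have n0 : n != 0 by apply: contraNneq p_ndvd1 => n0; move: p_dvd; rewrite n0.
have nN1 : n != -1 by apply: contraNneq p_ndvd1 => nN1; move: p_dvd; rewrite nN1 !dvdzE.
have [q def_2n1] := dvdzP p_dvd.
have value : (chebS K (n - 1) * chebV K (n + 1)).[omega] = q%:~R * p%:R - 1.
  have := congr1 (horner^~ omega) (chebDelta_identity K n).
  rewrite hornerM (rootP Delta_omega) mulr0 hornerD hornerN horner_int => /esym/eqP.
  by rewrite subr_eq0 => /eqP ->; rewrite (_ : 2 * n = q * p - 1) ?intrB ?intrM //; lia.
have vp_gt0 : 0 < v p%:R by rewrite vp ltr01.
have [] := valuation_mulr_subr1 v_valuation q vp_gt0; rewrite -value.
move=> + vvalue; rewrite hornerM mulf_eq0 negb_or => /andP[S0 V0].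
have omega_int := vint_chebS_chebV_unit v_valuation n0 nN1 vvalue.
have := vint_ge0 S0 (vint_chebS v_valuation omega_int (n - 1)).
have := vint_ge0 V0 (vint_chebV v_valuation omega_int (n + 1)).
rewrite hornerM valuationM // in vvalue; split=> //; lra.
Qed.
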